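(* Let $T$ be a subcubic tree of order $n$ and dissociation number $\psi$. If $\psi=\frac{4n+2}{5}$, then $T$ has exactly one maximum dissociation set, i.e., $\Phi(T)=1$.
   Context: All graphs are finite, simple and undirected. A subcubic tree is a tree of maximum degree at most $3$. A dissociation set in a graph $G$ is a vertex subset $F$ such that the induced subgraph $G[F]$ has maximum degree at most $1$; a maximum dissociation set is one of maximum cardinality, and the dissociation number $\psi(G)$ is that cardinality. $\Phi(G)$ denotes the number of maximum dissociation sets of $G$. *)

From mathcomp Require Import all_boot.
Set Implicit Arguments. Unset Strict Implicit. Unset Printing Implicit Defensive.

Definition simple_graph (V : finType) (e : rel V) : Prop :=
  symmetric e /\ irreflexive e.

Definition nbhd (V : finType) (e : rel V) (x : V) : {set V} := [set y | e x y].

Definition degree (V : finType) (e : rel V) (x : V) : nat := #|nbhd e x|.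

Definition edge_set (V : finType) (e : rel V) : {set {set V}} :=
  [set [set x; y] | x in V, y in V & e x y].

Definition connected_graph (V : finType) (e : rel V) : Prop :=
  forall x y : V, connect e x y.

Definition is_tree (V : finType) (e : rel V) : Prop :=
  [/\ simple_graph e, 0 < #|V|, connected_graph e & #|edge_set e| = #|V| - 1].

Definition subcubic (V : finType) (e : rel V) : Prop :=
  forall x : V, degree e x <= 3.

Definition dissociation_set (V : finType) (e : rel V) (F : {set V}) : bool :=
  [forall x in F, #|nbhd e x :&: F| <= 1].

Definition dissociation_number (V : finType) (e : rel V) : nat :=
  \max_(F : {set V} | dissociation_set e F) #|F|.

Definition max_dissociation_set (V : finType) (e : rel V) (F : {set V}) : bool :=
  dissociation_set e F && (#|F| == dissociation_number e).

Definition num_max_dissociation_sets (V : finType) (e : rel V) : nat :=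
  #|[set F : {set V} | max_dissociation_set e F]|.

From mathcomp Require Import all_boot zify.
Set Implicit Arguments. Unset Strict Implicit. Unset Printing Implicit Defensive.

(* Let F be a maximum dissociation set and S its complement, so that
   n = 5|S| + 2.  Among the 2(n - 1) ordered adjacent pairs of the tree at most
   |F| lie inside F and at most 3|S| start in S; this leaves no slack, so F
   induces a perfect matching, S is independent and every vertex of S has
   degree 3.  For two such sets F and F', a vertex of F' \ F has three
   neighbours in F, only one of them in F', hence two in F \ F'.  So the
   symmetric difference induces a subgraph of minimum degree 2, which a tree
   does not contain unless it is empty. *)

Lemma sum_nat_const_eq (I : finType) (A : {pred I}) (f : I -> nat) k :
  (forall x, x \in A -> f x <= k) -> \sum_(x in A) f x = #|A| * k ->
  forall x, x \in A -> f x = k.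
Proof.
move=> f_le_k sumE x xA; apply/eqP.
have /leqif_sum[_] : forall y, y \in A -> f y <= k ?= iff (f y == k).
  by move=> y yA; apply/leqif_eq/f_le_k.
by rewrite sumE sum_nat_const eqxx => /esym/forall_inP; apply.
Qed.

Section Arcs.
Variables (V : finType) (e : rel V).
Hypotheses (e_sym : symmetric e) (e_irr : irreflexive e).

Definition arcs (A B : {set V}) : nat :=
  \sum_(p : V * V) ((p.1 \in A) && (p.2 \in B) && e p.1 p.2 : nat).

Lemma arcsE A B : arcs A B = \sum_(x in A) #|nbhd e x :&: B|.
Proof.
rewrite /arcs -(pair_bigA _ (fun x y => ((x \in A) && (y \in B) && e x y) : nat)) /=.
rewrite [RHS]big_mkcond; apply: eq_bigr => x _ /=.
case: (x \in A); last by rewrite big1.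
rewrite -sum1_card [RHS]big_mkcond /=; apply: eq_bigr => y _.
by rewrite /nbhd !inE andbC.
Qed.

Lemma arcsC A B : arcs A B = arcs B A.
Proof.
rewrite /arcs (reindex_inj (h := fun p : V * V => (p.2, p.1))) /=; last first.
  by move=> [a b] [c d] [-> ->].
by apply: eq_bigr => -[x y] _ /=; rewrite (e_sym y) (andbC (y \in A)).
Qed.

Lemma arcs_setUl (A A' B : {set V}) : [disjoint A & A'] ->
  arcs (A :|: A') B = arcs A B + arcs A' B.
Proof.
move=> dAA'; rewrite /arcs -big_split; apply: eq_bigr => -[x y] _ /=.
rewrite in_setU; case xA: (x \in A); last by [].
by rewrite (disjointFr dAA' xA) addn0.
Qed.

Lemma arcs_setUr (A B B' : {set V}) : [disjoint B & B'] ->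
  arcs A (B :|: B') = arcs A B + arcs A B'.
Proof. by move=> dBB'; rewrite arcsC arcs_setUl // !(arcsC A). Qed.

Lemma arcs_set1l x B : arcs [set x] B = #|nbhd e x :&: B|.
Proof. by rewrite arcsE big_set1. Qed.

Lemma arcs_setU1 b (U : {set V}) : b \notin U ->
  arcs (b |: U) (b |: U) = arcs U U + 2 * #|nbhd e b :&: U|.
Proof.
move=> bU; have dbU : [disjoint [set b] & U] by rewrite disjoints1.
rewrite arcs_setUl // !arcs_setUr // (arcsC U) !arcs_set1l.
suff -> : nbhd e b :&: [set b] = set0 by rewrite cards0; lia.
by apply/setP => y; rewrite !inE andbC; case: eqP => // ->; apply: e_irr.
Qed.

Lemma handshake : arcs setT setT = 2 * #|edge_set e|.
Proof.
rewrite /arcs.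
transitivity (\sum_(p : V * V | e p.1 p.2) 1).
  by rewrite [RHS]big_mkcond; apply: eq_bigr => p _; rewrite !in_setT; case: (e _ _).
rewrite (partition_big (fun p : V * V => [set p.1; p.2]) (mem (edge_set e))) /=; last first.
  by move=> [x y] /= exy; apply/imset2P; exists x y; rewrite ?inE.
rewrite mulnC -sum_nat_const; apply: eq_bigr => E /imset2P [x y _].
rewrite inE /= => exy ->; rewrite sum1_card.
have arcs_xy : [pred p : V * V | e p.1 p.2 && ([set p.1; p.2] == [set x; y])]
    =i [set (x, y); (y, x)].
  move=> [a b]; rewrite !inE /= !xpair_eqE; apply/andP/idP => [[eab /eqP Eab] | ].
    have : a \in [set x; y] by rewrite -Eab !inE eqxx.
    have : b \in [set x; y] by rewrite -Eab !inE eqxx orbT.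
    rewrite !inE => /orP [] /eqP bE /orP [] /eqP aE;
      by move: eab; rewrite aE bE ?e_irr ?eqxx ?orbT.
  by case/orP=> /andP [/eqP -> /eqP ->]; rewrite ?(e_sym y) exy // setUC.
rewrite (eq_card arcs_xy) cards2 xpair_eqE.
by case: eqP => // xy; rewrite xy e_irr in exy.
Qed.

Lemma connected_arcs_lower_bound (U : {set V}) : connected_graph e ->
  U != set0 -> 2 * #|U| <= arcs U U -> 2 * #|V| <= arcs setT setT.
Proof.
move=> conn; move Dk: #|~: U| => k; elim: k U Dk => [|k IH] U Dk U_n0 dense.
  move/cards0_eq/(congr1 (@setC _)): Dk; rewrite setCK setC0 => UT.
  by rewrite UT cardsT in dense.
have [/existsP [a /existsP [b /and3P [aU bU eab]]] | no_exit] :=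
  boolP [exists a, exists b, [&& a \in U, b \notin U & e a b]].
  have nb_pos : 0 < #|nbhd e b :&: U|.
    by apply/card_gt0P; exists a; rewrite !inE e_sym eab.
  apply: (IH (b |: U)).
  - by have := cardsC (b |: U); have := cardsC U; rewrite cardsU1 bU; lia.
  - by apply/set0Pn; exists b; rewrite setU11.
  - by rewrite arcs_setU1 // cardsU1 bU; lia.
have [x xU] := set0Pn _ U_n0.
have /card_gt0P [y] : 0 < #|~: U| by rewrite Dk.
rewrite inE => yU.
have U_closed : closed e U.
  move=> a b eab; apply/idP/idP => [aU | bU]; apply: contraNT no_exit => nU.
    by apply/existsP; exists a; apply/existsP; exists b; rewrite aU nU eab.
  by apply/existsP; exists b; apply/existsP; exists a; rewrite bU nU e_sym eab.
by move: yU; rewrite -(closed_connect U_closed (conn x y)) xU.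
Qed.

End Arcs.

Section ExtremalDissociation.
Variables (V : finType) (e : rel V).

Definition extremal_dissociation (F : {set V}) : Prop :=
  (forall x, x \in F -> #|nbhd e x :&: F| = 1) /\
  (forall x, x \notin F -> degree e x = 3 /\ nbhd e x \subset F).

Lemma tree_arcs_lt (U : {set V}) :
  is_tree e -> U != set0 -> arcs e U U < 2 * #|U|.
Proof.
case=> [[e_sym e_irr] V_gt0 conn edges] U_n0; rewrite ltnNge; apply/negP => dense.
have := connected_arcs_lower_bound e_sym e_irr conn U_n0 dense.
by rewrite handshake // edges; lia.
Qed.

Lemma extremal_dissociationP (F : {set V}) : is_tree e -> subcubic e ->
  dissociation_set e F -> #|V| = 5 * #|~: F| + 2 -> extremal_dissociation F.
Proof.
case=> [[e_sym e_irr] _ _ edges] cubic /forall_inP F_diss card_V.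
set S := ~: F in card_V *.
have dFS : [disjoint F & S] by rewrite -subsets_disjoint.
have arcsT : arcs e setT setT = arcs e F F + 2 * arcs e S F + arcs e S S.
  by rewrite -(setUCr F) arcs_setUl ?arcs_setUr // (arcsC e_sym F S) -/S; lia.
have arcsS : arcs e S setT = arcs e S F + arcs e S S.
  by rewrite -(setUCr F) arcs_setUr.
have arcsFF : arcs e F F <= #|F|.
  by rewrite arcsE -sum1_card; apply: leq_sum.
have arcsS_le : arcs e S setT <= #|S| * 3.
  by rewrite arcsE -sum_nat_const; apply: leq_sum => x _; rewrite setIT; apply: cubic.
move: (handshake e_sym e_irr) (cardsC F); rewrite edges -/S card_V => arcsT_eq card_F.
have [arcsFF_eq arcsS_eq arcsSS_eq] :
    [/\ arcs e F F = #|F| * 1, arcs e S setT = #|S| * 3 & arcs e S S = 0].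
  by clearbody S; split; lia.
split=> [|x xF].
  by apply: sum_nat_const_eq F_diss _; rewrite -arcsE.
have xS : x \in S by rewrite inE.
split.
  rewrite /degree -(setIT (nbhd e x)).
  apply: (sum_nat_const_eq (f := fun y => #|nbhd e y :&: setT|)) xS => [y _|].
    by rewrite setIT; apply: cubic.
  by rewrite -arcsE.
move/eqP: arcsSS_eq; rewrite arcsE sum_nat_eq0 => /forall_inP/(_ x xS)/eqP/cards0_eq.
by move/eqP; rewrite -setDE setD_eq0.
Qed.

Lemma extremal_dissociation_neighbours (F1 F2 : {set V}) x :
  extremal_dissociation F1 -> extremal_dissociation F2 ->
  x \in F2 :\: F1 -> 2 <= #|nbhd e x :&: (F1 :\: F2)|.
Proof.
move=> [_ F1_cover] [F2_match _]; rewrite inE => /andP [xF1 xF2].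
have [deg_x N_F1] := F1_cover x xF1.
rewrite setIDA (setIidPl N_F1).
by have := cardsID F2 (nbhd e x); rewrite -/(degree e x) deg_x F2_match //; lia.
Qed.

Lemma extremal_dissociation_uniq (F1 F2 : {set V}) : is_tree e ->
  extremal_dissociation F1 -> extremal_dissociation F2 -> F1 = F2.
Proof.
move=> tree ext1 ext2; set W := (F1 :\: F2) :|: (F2 :\: F1).
have [W0 | W_n0] := eqVneq W set0.
  apply/setP => z; have : z \notin W by rewrite W0 inE.
  by rewrite !inE; case: (z \in F1); case: (z \in F2).
have /negP[] : ~~ (arcs e W W < 2 * #|W|).
  rewrite -leqNgt arcsE mulnC -sum_nat_const; apply: leq_sum => w.
  rewrite inE => /orP [] wW.
    apply: leq_trans (extremal_dissociation_neighbours ext2 ext1 wW) _.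
    by apply/subset_leq_card/setIS/subsetUr.
  apply: leq_trans (extremal_dissociation_neighbours ext1 ext2 wW) _.
  by apply/subset_leq_card/setIS/subsetUl.
exact: tree_arcs_lt.
Qed.

Lemma exists_max_dissociation_set : exists F, max_dissociation_set e F.
Proof.
have [|F F_diss F_max] :=
  eq_bigmax_cond (fun F : {set V} => #|F|) (A := dissociation_set e).
  by apply/card_gt0P; exists set0; rewrite unfold_in; apply/forall_inP => x; rewrite inE.
by exists F; apply/andP; split; [exact: F_diss | apply/eqP; rewrite -F_max].
Qed.

End ExtremalDissociation.

Theorem corollary3p3 (V : finType) (e : rel V) :
  is_tree e -> subcubic e ->
  5 * dissociation_number e = 4 * #|V| + 2 ->
  num_max_dissociation_sets e = 1.
Proof.
move=> tree cubic psiE.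
have max_extremal F : max_dissociation_set e F -> extremal_dissociation e F.
  case/andP=> F_diss /eqP card_F; apply: extremal_dissociationP => //.
  by have := cardsC F; lia.
have [F0 F0_max] := exists_max_dissociation_set e.
rewrite /num_max_dissociation_sets (_ : [set F | _] = [set F0]) ?cards1 //.
apply/setP => F; rewrite !inE; apply/idP/eqP => [F_max | ->] //.
by apply: extremal_dissociation_uniq tree _ _; apply: max_extremal.
Qed.
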